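(* Let $K>1$, $d\ge1$, and $\alpha_1,\dots,\alpha_K>0$. For $k=1,\dots,K$ let $p_0^{(k)}=\mathcal{N}({\bm{0}},\alpha_k{\bm{I}}_d)$, and let $p_0=\mathrm{PoE}(p_0^{(1)},\dots,p_0^{(K)})$. For any initial distribution $q_0$, denote by $q_t$ the law at time $t$ of the solution of the forward VP SDE started from $q_0$. Then for each $t\in(0,T]$, $$p_t=\mathrm{PoE}(p_t^{(1)},\dots,p_t^{(K)})$$ if and only if $\alpha_1=\dots=\alpha_K$.
   Context: Product of Experts: for probability densities $p^{(1)},\dots,p^{(K)}$ on $\mathbb{R}^d$, $\mathrm{PoE}(p^{(1)},\dots,p^{(K)})({\mathbf{x}})=\sqrt[K]{p^{(1)}({\mathbf{x}})\cdots p^{(K)}({\mathbf{x}})}\,/\,Z_K$ with $Z_K=\int\sqrt[K]{p^{(1)}({\mathbf{z}})\cdots p^{(K)}({\mathbf{z}})}\,\mathrm{d}{\mathbf{z}}$ (the normalized geometric mean). Forward VP SDE: $\mathrm{d}{\mathbf{z}}_t=-\beta_t{\mathbf{z}}_t\,\mathrm{d}t+\sqrt{2\beta_t}\,\mathrm{d}{\mathbf{w}}_t$ on $[0,T]$, ${\mathbf{z}}_0\sim q_0$, with a positive variance schedule $\beta_t$ and standard Wiener process ${\mathbf{w}}_t$; its strong solution is ${\mathbf{z}}_t=\gamma_t{\mathbf{z}}_0+\eta_t$ with deterministic $\gamma_t\in(0,1)$ for $t>0$ and Gaussian $\eta_t$ independent of ${\mathbf{z}}_0$, such that if ${\mathbf{z}}_0\sim\mathcal{N}({\bm{0}},{\bm{\Sigma}})$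 then ${\mathbf{z}}_t\sim\mathcal{N}({\bm{0}},\gamma_t{\bm{\Sigma}}+(1-\gamma_t){\bm{I}})$. Here $p_t^{(k)}$ and $p_t$ are obtained by this diffusion from $p_0^{(k)}$ and $p_0$ respectively, and equality means equality of distributions. *)

From HB Require Import structures.
From mathcomp Require Import all_boot all_order all_algebra.
From mathcomp Require Import all_classical all_reals all_analysis.
Set Implicit Arguments. Unset Strict Implicit. Unset Printing Implicit Defensive.
Import Order.TTheory GRing.Theory Num.Theory.
Local Open Scope classical_set_scope.
Local Open Scope ring_scope.

Section PoEDefs.
Variable R : realType.

Definition sqnorm (d : nat) (x : 'rV[R]_d) : R := \sum_(i < d) (x ord0 i) ^+ 2.

(* Lebesgue integral on R^d of a nonnegative (extended-real valued) function,
   defined as the iterated one-dimensional Lebesgue integral (Tonelli). *)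
Fixpoint intRd (d : nat) : ('rV[R]_d -> \bar R) -> \bar R :=
  match d return ('rV[R]_d -> \bar R) -> \bar R with
  | 0 => fun f => f 0
  | d'.+1 => fun f =>
      (\int[@lebesgue_measure R]_x
         intRd (fun v : 'rV[R]_d' => f (row_mx (\row_(i < 1) x) v)))%E
  end.

Definition gauss_density (d : nat) (v : R) (x : 'rV[R]_d) : R :=
  (2 * pi * v) `^ (- (d%:R / 2)) * expR (- sqnorm x / (2 * v)).

Definition geo_mean (d K : nat) (p : 'I_K -> 'rV[R]_d -> R) (x : 'rV[R]_d) : R :=
  (\prod_(k < K) p k x) `^ (K%:R)^-1.

Definition PoE (d K : nat) (p : 'I_K -> 'rV[R]_d -> R) (x : 'rV[R]_d) : R :=
  geo_mean p x / fine (intRd (fun z => (geo_mean p z)%:E)).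

(* Scaling factor of the strong solution of the forward VP SDE
   dz = -beta_t z dt + sqrt(2 beta_t) dw :  z_t = a_t z_0 + eta_t,
   a_t = exp(-int_0^t beta), eta_t ~ N(0, (1 - a_t^2) I) independent of z_0. *)
Definition vp_scale (beta : R -> R) (t : R) : R :=
  expR (- Rintegral (@lebesgue_measure R) `[0, t] beta).

(* Density at time t of the forward VP diffusion started from density q0:
   the law of a_t Z_0 + eta_t, i.e. x |-> int q0(y) N(x; a_t y, (1-a_t^2) I) dy. *)
Definition vp_diffuse (d : nat) (beta : R -> R) (t : R)
    (q0 : 'rV[R]_d -> R) (x : 'rV[R]_d) : R :=
  let a := vp_scale beta t in
  fine (intRd (fun y => (q0 y * gauss_density (1 - a ^+ 2) (x - a *: y))%:E)).

End PoEDefs.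

(* Both operations preserve centred isotropic Gaussians: the product of experts of
   N(0, a_k I) is N(0, H(a) I), with H the harmonic mean, and the forward diffusion
   sends N(0, v I) to N(0, (g v + b) I), where g = gamma_t lies in (0, 1) and
   b = 1 - g > 0.  Comparing the two sides at x = 0, the identity holds iff
   g H(a) + b = H(g a + b).  For u = 1/a this says that the mean of the strictly
   concave map u |-> u / (g + b u) equals its value at the mean of u, which forces
   all u_k to be equal (equality case of Jensen's inequality). *)

From HB Require Import structures.
From mathcomp Require Import all_boot all_order all_algebra.
From mathcomp Require Import all_classical all_reals all_analysis.
From mathcomp Require Import ring lra measurable_realfun.
Set Implicit Arguments. Unset Strict Implicit. Unset Printing Implicit Defensive.
Import Order.TTheory GRing.Theory Num.Theory.
Import numFieldNormedType.Exports.
Local Open Scope classical_set_scope.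
Local Open Scope ring_scope.

Section Means.
Variables (R : realFieldType) (K : nat).
Hypothesis K_gt0 : (0 < K)%N.

Definition mean (u : 'I_K -> R) : R := (\sum_(k < K) u k) / K%:R.

Definition harmonic_mean (w : 'I_K -> R) : R := (mean (fun k => (w k)^-1))^-1.

Let K_neq0 : K%:R != 0 :> R.
Proof. by rewrite pnatr_eq0 -lt0n. Qed.

Lemma mean_cst (c : R) : mean (fun _ => c) = c.
Proof. by rewrite /mean sumr_const card_ord -[c *+ K]mulr_natr mulfK. Qed.

Lemma mean_gt0 (u : 'I_K -> R) : (forall k, 0 < u k) -> 0 < mean u.
Proof.
move=> u_gt0; rewrite /mean divr_gt0 ?ltr0n //; set k0 := Ordinal K_gt0.
apply: (lt_le_trans (u_gt0 k0)); rewrite (bigD1 k0) //= lerDl.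
by apply: sumr_ge0 => k _; apply/ltW.
Qed.

Lemma harmonic_mean_gt0 (w : 'I_K -> R) : (forall k, 0 < w k) -> 0 < harmonic_mean w.
Proof. by move=> w_gt0; rewrite invr_gt0 mean_gt0 // => k; rewrite invr_gt0. Qed.

Lemma harmonic_mean_cst (c : R) : c != 0 -> harmonic_mean (fun _ => c) = c.
Proof. by move=> c_neq0; rewrite /harmonic_mean mean_cst invrK. Qed.

Lemma frac_tangent (p b m u : R) : p + b * m != 0 -> p + b * u != 0 ->
  u / (p + b * u) = m / (p + b * m) + p * (u - m) / (p + b * m) ^+ 2
                    - p * b * (u - m) ^+ 2 / ((p + b * u) * (p + b * m) ^+ 2).
Proof. by move=> m_neq0 u_neq0; field; rewrite m_neq0 u_neq0. Qed.

Lemma mean_frac_eq_cst (p b : R) (u : 'I_K -> R) :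
  0 < p -> 0 < b -> (forall k, 0 < u k) ->
  mean (fun k => u k / (p + b * u k)) = mean u / (p + b * mean u) ->
  forall k, u k = mean u.
Proof.
move=> p_gt0 b_gt0 u_gt0 jensen_eq; set m := mean u in jensen_eq *.
have pos_den v : 0 < v -> 0 < p + b * v by move=> v_gt0; rewrite addr_gt0 ?mulr_gt0.
have m_gt0 : 0 < m by apply: mean_gt0.
pose D k := p * b * (u k - m) ^+ 2 / ((p + b * u k) * (p + b * m) ^+ 2).
have D_ge0 k : 0 <= D k.
  have m_den := pos_den _ m_gt0; have uk_den := pos_den _ (u_gt0 k).
  apply: divr_ge0; first by rewrite mulr_ge0 ?sqr_ge0 ?mulr_ge0 ?ltW.
  by rewrite mulr_ge0 ?exprn_ge0 ?ltW.
have sum_dev : \sum_(k < K) (u k - m) = 0.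
  by rewrite sumrB sumr_const card_ord /m /mean -[_ *+ K]mulr_natr divfK ?subrr.
have sum_frac : \sum_(k < K) u k / (p + b * u k) =
                 K%:R * (m / (p + b * m)) - \sum_(k < K) D k.
  have m_den := lt0r_neq0 (pos_den _ m_gt0).
  rewrite (eq_bigr _ (fun k _ => frac_tangent m_den (lt0r_neq0 (pos_den _ (u_gt0 k))))).
  rewrite sumrB big_split /= sumr_const card_ord.
  have -> : \sum_(k < K) p * (u k - m) / (p + b * m) ^+ 2 = 0.
    by rewrite -mulr_suml -mulr_sumr sum_dev mulr0 mul0r.
  by rewrite addr0 mulr_natl.
have sumD : \sum_(k < K) D k = 0.
  have : \sum_(k < K) u k / (p + b * u k) = K%:R * (m / (p + b * m)).
    by rewrite -jensen_eq /mean mulrC divfK.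
  by rewrite sum_frac; lra.
move=> k; have /eqP : D k = 0 by apply: (psumr_eq0P _ sumD) => // j _; apply: D_ge0.
have den_gt0 : 0 < (p + b * u k) * (p + b * m) ^+ 2.
  by rewrite mulr_gt0 ?exprn_gt0 ?pos_den.
rewrite /D !mulf_eq0 invr_eq0 (gt_eqF p_gt0) (gt_eqF b_gt0) (gt_eqF den_gt0) /=.
by rewrite orbF orbb subr_eq0 => /eqP.
Qed.

Lemma harmonic_mean_affine_eq (p b : R) (w : 'I_K -> R) :
  0 < p -> 0 < b -> (forall k, 0 < w k) ->
  harmonic_mean (fun k => p * w k + b) = p * harmonic_mean w + b ->
  forall i j, w i = w j.
Proof.
move=> p_gt0 b_gt0 w_gt0 hm_eq; pose u k := (w k)^-1.
have u_gt0 k : 0 < u k by rewrite invr_gt0.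
suff u_mean : forall k, u k = mean u.
  by move=> i j; apply: invr_inj; rewrite -/(u i) -/(u j) !u_mean.
apply: (@mean_frac_eq_cst p b u p_gt0 b_gt0 u_gt0).
have m_gt0 : 0 < mean u by apply: mean_gt0.
have frac_u k : (p * w k + b)^-1 = u k / (p + b * u k).
  have wk_gt0 := w_gt0 k; rewrite /u.
  by field; rewrite !gt_eqF // ltr_wpDl ?mulr_ge0 ?ltW // ?mulr_gt0.
move: hm_eq; rewrite /harmonic_mean -/u {1}/mean (eq_bigr _ (fun k _ => frac_u k)) -/(mean _).
move/(congr1 GRing.inv); rewrite invrK => ->.
have den_gt0 : 0 < p + b * mean u by apply: addr_gt0 => //; apply: mulr_gt0.
by field; rewrite !gt_eqF.
Qed.
End Means.

Section Gaussians.
Variable R : realType.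

Lemma normal_pdf_expR (m s y : R) : 0 < s ->
  normal_pdf m s y =
  expR (- (2^-1 * ln (2 * pi * s ^+ 2)) - (y - m) ^+ 2 / (2 * s ^+ 2)).
Proof.
move=> s_gt0; rewrite /normal_pdf gt_eqF // /normal_peak /normal_fun.
have -> : s ^+ 2 * pi *+ 2 = 2 * pi * s ^+ 2 by rewrite -mulr_natl; ring.
have -> : s ^+ 2 *+ 2 = 2 * s ^+ 2 by rewrite -mulr_natl.
have var2_gt0 : 0 < 2 * pi * s ^+ 2 by rewrite !mulr_gt0 // ?pi_gt0 // exprn_gt0.
rewrite -powR12_sqrt ?ltW // -powRN /powR gt_eqF // -expRD.
by congr expR; ring.
Qed.

Definition gauss1 (v : R) : R -> R := normal_pdf 0 (Num.sqrt v).

Lemma gauss1E (v x : R) : 0 < v ->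
  gauss1 v x = expR (- (2^-1 * ln (2 * pi * v)) - x ^+ 2 / (2 * v)).
Proof. by move=> v_gt0; rewrite /gauss1 normal_pdf_expR ?sqrtr_gt0 // sqr_sqrtr ?ltW // subr0. Qed.

Lemma gauss_densityE (d : nat) (v : R) (x : 'rV[R]_d) : 0 < v ->
  gauss_density v x = expR (- (d%:R / 2) * ln (2 * pi * v) - sqnorm x / (2 * v)).
Proof.
move=> v_gt0; rewrite /gauss_density /powR gt_eqF ?mulr_gt0 ?pi_gt0 // -expRD.
by congr expR; ring.
Qed.

Lemma gauss_density_prod (d : nat) (v : R) (x : 'rV[R]_d) : 0 < v ->
  gauss_density v x = \prod_(i < d) gauss1 v (x ord0 i).
Proof.
move=> v_gt0; rewrite gauss_densityE // (eq_bigr _ (fun i _ => gauss1E _ v_gt0)).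
rewrite -expR_sum sumrB sumr_const card_ord /sqnorm -mulr_suml -mulr_natl.
by congr expR; ring.
Qed.

Lemma intRd_prod (d : nat) (k : R) (f : 'I_d -> R -> R) (c : 'I_d -> R) :
  0 <= k -> (forall i x, 0 <= f i x) -> (forall i, measurable_fun setT (f i)) ->
  (forall i, (\int[lebesgue_measure]_x (f i x)%:E)%E = (c i)%:E) ->
  intRd (fun y : 'rV[R]_d => (k * \prod_(i < d) f i (y ord0 i))%:E) =
  (k * \prod_(i < d) c i)%:E.
Proof.
elim: d k f c => [|d IH] k f c k_ge0 f_ge0 f_mes f_int; first by rewrite /= !big_ord0.
have c_ge0 i : 0 <= c i.
  by rewrite -lee_fin -f_int; apply: integral_ge0 => x _; rewrite lee_fin.
have row_head x (v : 'rV[R]_d) : row_mx (\row_(i < 1) x) v ord0 ord0 = x.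
  by rewrite (_ : ord0 = lshift d (ord0 : 'I_1)) ?row_mxEl ?mxE //; apply: ord_inj.
have row_tail x (v : 'rV[R]_d) i : row_mx (\row_(i < 1) x) v ord0 (lift ord0 i) = v ord0 i.
  by rewrite (_ : lift ord0 i = rshift 1 i) ?row_mxEr //; apply: ord_inj.
transitivity (\int[lebesgue_measure]_x
    ((k * \prod_(i < d) c (lift ord0 i))%:E * (f ord0 x)%:E))%E.
  apply: eq_integral => x _; rewrite -EFinM mulrAC.
  rewrite -(IH _ (fun i => f (lift ord0 i)) (fun i => c (lift ord0 i))) ?mulr_ge0 //.
  congr intRd; apply/funext => v; rewrite big_ord_recl row_head mulrA.
  by congr (_ * _)%:E; apply: eq_bigr => i _; rewrite row_tail.
rewrite ge0_integralZl ?lee_fin ?mulr_ge0 ?prodr_ge0 //.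
- by rewrite f_int -EFinM big_ord_recl mulrAC mulrA.
- by apply/measurable_EFinP; apply: f_mes.
- by move=> x _; rewrite lee_fin.
Qed.

Lemma intRd_gauss_density (d : nat) (C v : R) : 0 <= C -> 0 < v ->
  intRd (fun y : 'rV[R]_d => (C * gauss_density v y)%:E) = C%:E.
Proof.
move=> C_ge0 v_gt0.
under eq_fun do rewrite gauss_density_prod //.
rewrite (@intRd_prod d C (fun _ => gauss1 v) (fun _ => 1)) ?big1 ?mulr1 // => *.
- exact: normal_pdf_ge0.
- exact: measurable_normal_pdf.
- exact: integral_normal_pdf.
Qed.

Lemma gauss1_conv (h b a u : R) : 0 < h -> 0 < b ->
  (\int[lebesgue_measure]_y (gauss1 h y * gauss1 b (u - a * y))%:E)%E =
  (gauss1 (a ^+ 2 * h + b) u)%:E.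
Proof.
move=> h_gt0 b_gt0; set V := a ^+ 2 * h + b.
have V_gt0 : 0 < V by rewrite ltr_wpDl // mulr_ge0 ?sqr_ge0 ?ltW.
have pi_gt0 := @pi_gt0 R.
(* Completing the square in y: the posterior of y given u is N(m, s^2) *)
set m := a * h * u / V; set s := Num.sqrt (h * b / V).
have hbV_gt0 : 0 < h * b / V by rewrite !mulr_gt0 // invr_gt0.
have s_gt0 : 0 < s by rewrite sqrtr_gt0.
have s2 : s ^+ 2 = h * b / V by rewrite sqr_sqrtr // ltW.
have factor y : gauss1 h y * gauss1 b (u - a * y) = gauss1 V u * normal_pdf m s y.
  rewrite !gauss1E // normal_pdf_expR // s2 -!expRD; congr expR.
  have lnE : ln (2 * pi * h) + ln (2 * pi * b) =
             ln (2 * pi * V) + ln (2 * pi * (h * b / V)).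
    by rewrite -!lnM ?posrE ?mulr_gt0 ?invr_gt0 //; congr ln; field; rewrite gt_eqF.
  have -> : ln (2 * pi * b) = ln (2 * pi * V) + ln (2 * pi * (h * b / V)) - ln (2 * pi * h).
    by rewrite -lnE; ring.
  by rewrite /m /V; field; rewrite !gt_eqF.
under eq_integral do rewrite factor EFinM.
rewrite ge0_integralZl ?lee_fin ?normal_pdf_ge0 //.
- by rewrite integral_normal_pdf mule1.
- by apply/measurable_EFinP; apply: measurable_normal_pdf.
- by move=> y _; rewrite lee_fin normal_pdf_ge0.
Qed.

Lemma vp_diffuse_gauss_density (d : nat) (beta : R -> R) (t h : R) (x : 'rV[R]_d) :
  0 < h -> 0 < 1 - vp_scale beta t ^+ 2 ->
  vp_diffuse beta t (gauss_density h) x =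
  gauss_density (vp_scale beta t ^+ 2 * h + (1 - vp_scale beta t ^+ 2)) x.
Proof.
rewrite /vp_diffuse; set a := vp_scale beta t; set b := 1 - a ^+ 2 => h_gt0 b_gt0.
rewrite (_ : (fun y => _) = fun y : 'rV[R]_d =>
    (1 * \prod_(i < d) (gauss1 h (y ord0 i) * gauss1 b (x ord0 i - a * y ord0 i)))%:E).
  2: apply/funext => y; rewrite mul1r !gauss_density_prod // -big_split /=.
  2: by congr EFin; apply: eq_bigr => i _; rewrite !mxE.
rewrite (@intRd_prod d 1 (fun i y => gauss1 h y * gauss1 b (x ord0 i - a * y))
   (fun i => gauss1 (a ^+ 2 * h + b) (x ord0 i))) //=.
- have V_gt0 : 0 < a ^+ 2 * h + b by rewrite ltr_wpDl // mulr_ge0 ?sqr_ge0 ?ltW.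
  by rewrite mul1r gauss_density_prod.
- by move=> i y; rewrite mulr_ge0 ?normal_pdf_ge0.
- move=> i; apply: measurable_funM; first exact: measurable_normal_pdf.
  apply: (measurableT_comp (f := gauss1 b)); first exact: measurable_normal_pdf.
  by apply: measurable_funB => //; apply: measurable_funM.
- by move=> i; apply: gauss1_conv.
Qed.

Lemma geo_mean_gauss_density (d K : nat) (w : 'I_K -> R) :
  (0 < K)%N -> (forall k, 0 < w k) ->
  exists2 C : R, 0 < C & forall x : 'rV[R]_d,
    geo_mean (fun k => gauss_density (w k)) x = C * gauss_density (harmonic_mean w) x.
Proof.
move=> K_gt0 w_gt0; have H_gt0 := harmonic_mean_gt0 K_gt0 w_gt0.
set A := \sum_(k < K) (- (d%:R / 2) * ln (2 * pi * w k)).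
exists (expR (A / K%:R + d%:R / 2 * ln (2 * pi * harmonic_mean w))) => [|x].
  exact: expR_gt0.
rewrite /geo_mean (eq_bigr _ (fun k _ => gauss_densityE x (w_gt0 k))).
rewrite -expR_sum -expRM gauss_densityE // -expRD; congr expR.
rewrite sumrB -/A (eq_bigr (fun k => sqnorm x / 2 * (w k)^-1)); last first.
  by move=> k _; rewrite invfM mulrA.
have K_neq0 : K%:R != 0 :> R by rewrite pnatr_eq0 -lt0n.
have m_gt0 : 0 < mean (fun k => (w k)^-1) by apply: mean_gt0 => // k; rewrite invr_gt0.
rewrite -mulr_sumr -(divfK K_neq0 (\sum_(k < K) _)) -/(mean _) /harmonic_mean.
by field; rewrite K_neq0 gt_eqF.
Qed.

Lemma PoE_gauss_density (d K : nat) (w : 'I_K -> R) (x : 'rV[R]_d) :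
  (0 < K)%N -> (forall k, 0 < w k) ->
  PoE (fun k => gauss_density (w k)) x = gauss_density (harmonic_mean w) x.
Proof.
move=> K_gt0 w_gt0; have [C C_gt0 geoE] := geo_mean_gauss_density d K_gt0 w_gt0.
rewrite /PoE geoE (_ : (fun z => _) = fun z => (C * gauss_density (harmonic_mean w) z)%:E).
  by rewrite intRd_gauss_density ?ltW ?harmonic_mean_gt0 //= mulrAC divff ?mul1r ?gt_eqF.
by apply/funext => z; rewrite geoE.
Qed.

Lemma gauss_density0_inj (d : nat) (v1 v2 : R) : (0 < d)%N -> 0 < v1 -> 0 < v2 ->
  gauss_density v1 (0 : 'rV[R]_d) = gauss_density v2 (0 : 'rV[R]_d) -> v1 = v2.
Proof.
move=> d_gt0 v1_gt0 v2_gt0; rewrite !gauss_densityE //.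
have -> : sqnorm (0 : 'rV[R]_d) = 0 by rewrite /sqnorm big1 // => i _; rewrite mxE expr0n.
have d2_neq0 : - (d%:R / 2) != 0 :> R by rewrite oppr_eq0 gt_eqF ?divr_gt0 ?ltr0n.
have pi2_gt0 : 0 < 2 * pi :> R by rewrite mulr_gt0 ?pi_gt0.
rewrite !mul0r !subr0 => /expR_inj /(mulfI d2_neq0) /ln_inj ln_eq.
by apply: (mulfI (lt0r_neq0 pi2_gt0)); apply: ln_eq; rewrite posrE mulr_gt0.
Qed.

End Gaussians.

Lemma Rintegral_itv_gt0 (R : realType) (f : R -> R) (a b : R) : a < b ->
  {within `[a, b], continuous f} -> (forall x, a <= x <= b -> 0 < f x) ->
  0 < Rintegral (@lebesgue_measure R) `[a, b] f.
Proof.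
move=> ab f_cont f_gt0.
have [c c_ab f_min] := EVT_min (ltW ab) f_cont.
have fc_gt0 : 0 < f c by apply: f_gt0; rewrite in_itv /= in c_ab.
apply: (@lt_le_trans _ _ (f c * (b - a))); first by rewrite mulr_gt0 ?subr_gt0.
have -> : f c * (b - a) = Rintegral (@lebesgue_measure R) `[a, b] (cst (f c)).
  have itv_ab : lebesgue_measure (`[a, b]%classic : set R) = (b - a)%:E.
    by rewrite lebesgue_measure_itv /= lte_fin ab EFinB.
  by rewrite Rintegral_cst //; congr (_ * _); exact: esym (congr1 fine itv_ab).
apply: le_Rintegral => //.
- apply: continuous_compact_integrable; first exact: segment_compact.
  by apply: continuous_subspaceT; apply: cst_continuous.
- exact: continuous_compact_integrable (@segment_compact _ a b) f_cont.
Qed.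

Lemma vp_scale_lt1 (R : realType) (beta : R -> R) (T t : R) :
  {within `[0, T], continuous beta} -> (forall s, 0 <= s <= T -> 0 < beta s) ->
  0 < t <= T -> vp_scale beta t < 1.
Proof.
move=> beta_cont beta_gt0 /andP[t_gt0 t_le_T].
have sub : `[0, t] `<=` `[0, T] by apply: subset_itvl; rewrite bnd_simp.
rewrite /vp_scale expR_lt1 oppr_lt0 Rintegral_itv_gt0 //.
- exact: continuous_subspaceW sub beta_cont.
- by move=> s /andP[s_ge0 s_le_t]; rewrite beta_gt0 // s_ge0 (le_trans s_le_t).
Qed.

Theorem proposition4 (R : realType) (K d : nat) (alpha : 'I_K -> R)
    (beta : R -> R) (T : R) :
  (1 < K)%N -> (1 <= d)%N -> (forall k, 0 < alpha k) ->
  0 < T -> {within `[0, T], continuous beta} ->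
  (forall s, 0 <= s <= T -> 0 < beta s) ->
  forall t, 0 < t <= T ->
  ((forall x : 'rV[R]_d,
      vp_diffuse beta t (PoE (fun k => @gauss_density R d (alpha k))) x =
      PoE (fun k => vp_diffuse beta t (@gauss_density R d (alpha k))) x)
   <-> (forall i j, alpha i = alpha j)).
Proof.
move=> K_gt1 d_gt0 alpha_gt0 _ beta_cont beta_gt0 t t_range.
have K_gt0 : (0 < K)%N by apply: ltn_trans K_gt1.
set a := vp_scale beta t.
have a_gt0 : 0 < a by apply: expR_gt0.
have a_lt1 : a < 1 := vp_scale_lt1 beta_cont beta_gt0 t_range.
have a2_gt0 : 0 < a ^+ 2 by rewrite exprn_gt0.
have b_gt0 : 0 < 1 - a ^+ 2 by nra.
set b := 1 - a ^+ 2 in b_gt0 *.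
have diffused_gt0 k : 0 < a ^+ 2 * alpha k + b by rewrite addr_gt0 ?mulr_gt0.
have lhsE x : vp_diffuse beta t (PoE (fun k => gauss_density (alpha k))) x =
              gauss_density (a ^+ 2 * harmonic_mean alpha + b) x.
  rewrite (_ : PoE _ = gauss_density (harmonic_mean alpha)).
    by rewrite vp_diffuse_gauss_density ?harmonic_mean_gt0.
  by apply/funext => y; rewrite PoE_gauss_density.
have rhsE x : PoE (fun k => vp_diffuse beta t (gauss_density (alpha k))) x =
              gauss_density (harmonic_mean (fun k => a ^+ 2 * alpha k + b)) x.
  rewrite (_ : (fun k => _) = fun k => gauss_density (a ^+ 2 * alpha k + b)).
    by rewrite PoE_gauss_density.
  by apply/funext => k; apply/funext => y; rewrite vp_diffuse_gauss_density.
split => [PoE_eq | alpha_cst].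
  apply: (harmonic_mean_affine_eq K_gt0 a2_gt0 b_gt0 alpha_gt0).
  apply: (@gauss_density0_inj _ d); rewrite ?harmonic_mean_gt0 //.
    by rewrite addr_gt0 ?mulr_gt0 ?harmonic_mean_gt0.
  by rewrite -lhsE -rhsE PoE_eq.
move=> x; rewrite lhsE rhsE.
have -> : alpha = fun=> alpha (Ordinal K_gt0) by apply/funext => k; apply: alpha_cst.
by rewrite !harmonic_mean_cst ?gt_eqF ?(diffused_gt0 (Ordinal K_gt0)).
Qed.
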